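(* Let $(P,Q)$ be a negative semistandard notched bitableau with at least one box, and let $b$ be the minimum of all entries of $Q$. Then $P$ is semistandard on $b$.
   Context: A notched tableau $P$ is a finite sequence of rows $P_1,\dots,P_r$ (top to bottom), each a left-justified (possibly empty) row of boxes filled with positive integers. It is row strict if entries strictly increase left to right in each row; a row of a row-strict tableau is identified with the set of its entries. A notched bitableau $(P,Q)$ is a pair of notched tableaux of the same shape (same number of rows and same row lengths). For finite multisets $A=\{a_1\le\dots\le a_k\}$, $B=\{b_1\le\dots\le b_k\}$ of positive integers of equal size, $A\le B$ means $a_i\le b_i$ for all $i$, and $A\lessdot B$ means $A,B$ nonempty and $a_i<b_i$ for all $i$. For finite multisets $A,B,C,D$ with $|A|+|D|=|B|+|C|$, ''$A-C\le B-D$'' means $A\sqcup D\le B\sqcup C$ ($\sqcup$ = multiset union). $(P,Q)$ is semistandard if both are row strict and $P_1-Q_1\le P_2-Q_2\le\cdots\le P_r-Q_r$; it is negative if $P_i\lessdot Q_i$ for all $i$. For a row-strict $P$ and $b\in\mathbb{N}$, $P^{<b}$ is obtained by deleting all entries $\ge b$ (these lie at the right ends of rows); $P$ is semistandard on $b$ if the row lengths of $P^{<b}$ weakly decrease from top to bottom and the entries of $P^{<b}$ weakly increase down each column. *)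

From mathcomp Require Import all_boot.
Set Implicit Arguments. Unset Strict Implicit. Unset Printing Implicit Defensive.

(* A notched tableau: a list of rows (top to bottom), each a list of entries
   (left to right); entries are positive integers. *)
Definition tableau := seq (seq nat).

Definition notched_tableau (P : tableau) : Prop :=
  forall r, r \in P -> forall x, x \in r -> 0 < x.

Definition same_shape (P Q : tableau) : Prop :=
  map size P = map size Q.

Definition row_strict (P : tableau) : Prop :=
  forall r, r \in P -> sorted ltn r.

Definition mle (A B : seq nat) : bool :=
  all2 leq (sort leq A) (sort leq B).

Definition mlt (A B : seq nat) : bool :=
  [&& A != [::], B != [::] & all2 ltn (sort leq A) (sort leq B)].

(* "A - C <= B - D" means A ⊔ D <= B ⊔ C *)
Definition mdiff_le (A C B D : seq nat) : bool := mle (A ++ D) (B ++ C).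

Definition nth_row (P : tableau) (i : nat) : seq nat := nth [::] P i.

Definition semistandard_bitableau (P Q : tableau) : Prop :=
  [/\ row_strict P, row_strict Q &
      forall i, i.+1 < size P ->
        mdiff_le (nth_row P i) (nth_row Q i) (nth_row P i.+1) (nth_row Q i.+1)].

Definition negative_bitableau (P Q : tableau) : Prop :=
  forall i, i < size P -> mlt (nth_row P i) (nth_row Q i).

Definition trunc_below (b : nat) (P : tableau) : tableau :=
  map (filter (fun x => x < b)) P.

Definition semistandard_on (b : nat) (P : tableau) : Prop :=
  let P' := trunc_below b P in
  (forall i, i.+1 < size P' -> size (nth_row P' i.+1) <= size (nth_row P' i)) /\
  (forall i j, i.+1 < size P' -> j < size (nth_row P' i.+1) ->
     nth 0 (nth_row P' i) j <= nth 0 (nth_row P' i.+1) j).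

From mathcomp Require Import all_boot.

Set Implicit Arguments.
Unset Strict Implicit.
Unset Printing Implicit Defensive.

(* Every entry of Q is at least b, so deleting the entries >= b from the
   sorted multisets P_i ⊔ Q_{i+1} and P_{i+1} ⊔ Q_i leaves exactly P_i^{<b}
   and P_{i+1}^{<b}.  Comparing sorted sequences entrywise, P_i ⊔ Q_{i+1} <=
   P_{i+1} ⊔ Q_i forces every entry of P_{i+1}^{<b} to bound the entry of the
   same rank in P_i ⊔ Q_{i+1}, which is then < b and hence the entry of the
   same rank in P_i^{<b}. *)

Definition row_below (b : nat) (r : seq nat) : seq nat := [seq x <- r | x < b].

Definition weakly_above (u v : seq nat) : Prop :=
  size v <= size u /\ forall j, j < size v -> nth 0 u j <= nth 0 v j.

Lemma row_below_ge (b : nat) (r : seq nat) :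
  (forall x, x \in r -> b <= x) -> row_below b r = [::].
Proof.
move=> r_ge; rewrite -(filter_pred0 r); apply: eq_in_filter => x /r_ge.
by rewrite /= ltnNge => ->.
Qed.

Lemma weakly_above_row_below (b : nat) (u v : seq nat) :
  sorted leq v -> all2 leq u v -> weakly_above (row_below b u) (row_below b v).
Proof.
elim: u v => [|x u IHu] [|y v] //=.
move=> v_sorted /andP[le_xy le_uv].
have [lt_yb | le_by] := ltnP y b.
  rewrite (leq_ltn_trans le_xy lt_yb) /=.
  have [le_size le_nth] := IHu v (path_sorted v_sorted) le_uv.
  by split=> // -[|j] //= /le_nth.
have /allP y_le := order_path_min leq_trans v_sorted.
rewrite (@row_below_ge b v) => [|z /y_le]; last exact: leq_trans le_by.
by split.
Qed.

Lemma row_below_sort_cat (b : nat) (u w : seq nat) :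
  sorted leq u -> (forall x, x \in w -> b <= x) ->
  row_below b (sort leq (u ++ w)) = row_below b u.
Proof.
move=> u_sorted w_ge.
rewrite /row_below filter_sort; [|exact: leq_total|exact: leq_trans].
rewrite filter_cat -/(row_below b w) row_below_ge // cats0.
by apply/sorted_sort/(sorted_filter leq_trans); first exact: leq_trans.
Qed.

Lemma mdiff_le_weakly_above (b : nat) (p q p' q' : seq nat) :
  sorted leq p -> sorted leq p' ->
  (forall x, x \in q -> b <= x) -> (forall x, x \in q' -> b <= x) ->
  mdiff_le p q p' q' -> weakly_above (row_below b p) (row_below b p').
Proof.
move=> p_sorted p'_sorted q_ge q'_ge le_pq.
rewrite -(row_below_sort_cat p_sorted q'_ge).
rewrite -(row_below_sort_cat p'_sorted q_ge).
exact: weakly_above_row_below (sort_sorted leq_total _) le_pq.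
Qed.

Lemma weakly_above_semistandard_on (b : nat) (P : tableau) :
  (forall i, i.+1 < size P ->
     weakly_above (row_below b (nth_row P i)) (row_below b (nth_row P i.+1))) ->
  semistandard_on b P.
Proof.
move=> above; rewrite /semistandard_on /trunc_below size_map /nth_row.
split=> [i | i j] lt_iP; rewrite !(nth_map [::]) //; try exact: ltnW.
- exact: (above i lt_iP).1.
- exact: (above i lt_iP).2.
Qed.

Lemma row_strict_sorted_leq (P : tableau) (i : nat) :
  row_strict P -> i < size P -> sorted leq (nth_row P i).
Proof.
move=> strictP lt_iP.
by move: (strictP _ (mem_nth [::] lt_iP)); rewrite ltn_sorted_uniq_leq => /andP[].
Qed.

Theorem lemma5p2 (P Q : tableau) (b : nat) :
  notched_tableau P -> notched_tableau Q -> same_shape P Q ->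
  semistandard_bitableau P Q -> negative_bitableau P Q ->
  0 < size (flatten P) ->
  b \in flatten Q -> (forall x, x \in flatten Q -> b <= x) ->
  semistandard_on b P.
Proof.
move=> _ _ shapePQ [strictP _ ssPQ] _ _ _ b_min.
have sizeQ : size Q = size P by rewrite -(size_map size Q) -shapePQ size_map.
have rowQ_ge i : i < size P -> forall x, x \in nth_row Q i -> b <= x.
  move=> lt_iP x x_in; apply/b_min/flattenP.
  by exists (nth_row Q i); rewrite // mem_nth ?sizeQ.
apply: weakly_above_semistandard_on => i lt_i1P; have lt_iP := ltnW lt_i1P.
apply: (mdiff_le_weakly_above _ _ (rowQ_ge _ lt_iP) (rowQ_ge _ lt_i1P)).
- exact: row_strict_sorted_leq.
- exact: row_strict_sorted_leq.
- exact: ssPQ.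
Qed.
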